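(* In algorithm StochKnap with parameter $C>1$, suppose the critical scale satisfies $\kappa>1$. Then for every subset $O\subseteq N$ with $c(O)\le B$, we have $\sum_{i\in S\setminus O}r_\kappa(i)\ge\frac{\epsilon(C-1)}{2}$, where $S=S_\kappa$ is the output.
   Context: Algorithm StochKnap$(N,c,R,B,\epsilon)$ with parameter $C>0$: $N$ is a finite set of items, item $i$ has cost $c(i)>0$ and a nonnegative random reward $R(i)$, rewards independent; $W\ge1$ is an integer with $\sum_{i\in N}\mathbb E[R(i)]\le W$; $B>0$, $\epsilon\in(0,1)$. Let $T=\{i\in N: c(i)\le B\}$ and $D=CB$. For $\tau>0$ let $r_\tau(i)=\mathbb E[\min\{R(i)/\tau,1\}]$. Order $T$ as $i_1,i_2,\ldots$ with $r_\tau(i_j)/c(i_j)$ nonincreasing. If $c(T)\ge D$, let $t$ be the smallest index with $\sum_{j\le t}c(i_j)\ge D$, set $S_\tau=\{i_1,\ldots,i_t\}$ and slope $s_\tau=r_\tau(i_t)/c(i_t)$; otherwise $S_\tau=T$, $s_\tau=0$. Scale $\tau$ is rich if $s_\tau>\epsilon/B$, poor otherwise. Scales $\mathcal G=\{2^\ell:\ell\in\mathbb Z,0\le\ell\le\lceil\log_2W\rceil\}$; critical scale $\kappa$ = smallest poor scale in $\mathcal G$ (assumed to exist); output $S=S_\kappa$. *)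

From HB Require Import structures.
From mathcomp Require Import all_boot all_order all_algebra.
From mathcomp Require Import all_classical all_reals all_analysis.
Set Implicit Arguments.
Unset Strict Implicit.
Unset Printing Implicit Defensive.
Import Order.TTheory GRing.Theory Num.Theory.
Local Open Scope classical_set_scope.
Local Open Scope ring_scope.

Section Prob.
Context {d} {T : measurableType d} {R : realType} (P : probability T R) {I : finType}.

Definition mutually_independent (X : I -> {RV P >-> R}) : Prop :=
  forall (J : {set I}) (A : I -> set R), (forall i, measurable (A i)) ->
    P (\big[setI/setT]_(i in J) (X i @^-1` A i)) =
    (\prod_(i in J) P (X i @^-1` A i))%E.

(* r_tau(i) = E[min(R(i)/tau, 1)]  (a value in [0,1], hence finite). *)
Definition rtrunc (X : I -> {RV P >-> R}) (tau : R) (i : I) : R :=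
  fine ('E_P[fun w => Num.min (X i w / tau) 1]).

End Prob.

Section Greedy.
Context {R : realType} {I : finType}.
Implicit Types (c r : I -> R) (s : seq I) (D B : R).

Definition eligible c B : {set I} := finset (fun i => c i <= B).

Definition valid_order r c (T0 : {set I}) s : Prop :=
  perm_eq s (enum T0) /\ sorted (fun i j => r j / c j <= r i / c i) s.

Definition prefix_cost c s (k : nat) : R := \sum_(i <- take k s) c i.

Definition cut_index c D s : nat :=
  find (fun k => D <= prefix_cost c s k) (iota 0 (size s).+1).

Definition greedy_set c D (T0 : {set I}) s : {set I} :=
  if D <= \sum_(i in T0) c i then finset (fun i => i \in take (cut_index c D s) s)
  else T0.

(* s_tau = r(i_t)/c(i_t)  (i_t is the last element of the prefix i_1..i_t) *)
Definition greedy_slope r c D (T0 : {set I}) s : R :=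
  if D <= \sum_(i in T0) c i then
    match rev (take (cut_index c D s) s) with
    | i :: _ => r i / c i
    | [::] => 0
    end
  else 0.

End Greedy.

From HB Require Import structures.
From mathcomp Require Import all_boot all_order all_algebra.
From mathcomp Require Import all_classical all_reals all_analysis.
From mathcomp Require Import ring lra.
Set Implicit Arguments.
Unset Strict Implicit.
Unset Printing Implicit Defensive.
Import Order.TTheory GRing.Theory Num.Theory.
Local Open Scope ring_scope.

(* Since kappa > 1, the scale kappa/2 is rich: its greedy prefix costs at least
   C B and every item in it has ratio r_(kappa/2)(i)/c(i) > eps/B.  Doubling the
   truncation level loses at most a factor 2, r_tau <= 2 r_(2 tau), so that prefix
   is a set of cost >= C B whose r_kappa-ratios all exceed eps/(2B).  The greedy
   prefix at kappa takes items of largest ratio first, so all of its items also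
   have ratio > eps/(2B); removing O costs at most B, which leaves cost
   >= (C-1) B and hence r_kappa-mass >= eps (C-1)/2. *)

Section SumBounds.
Variables (R : realFieldType) (I : finType).

Lemma ler_sum_nneg_subset (A B : {pred I}) (F : I -> R) :
  {subset A <= B} -> (forall i, 0 <= F i) ->
  \sum_(i in A) F i <= \sum_(i in B) F i.
Proof.
move=> AB F0; rewrite big_mkcond [leRHS]big_mkcond ler_sum // => i _.
by case: ifP => [/AB -> // | _]; case: ifP.
Qed.

Lemma ler_sum_setD (A O : {set I}) (F : I -> R) : (forall i, 0 <= F i) ->
  \sum_(i in A) F i - \sum_(i in O) F i <= \sum_(i in A :\: O) F i.
Proof.
move=> F0; rewrite (big_setID O) /= lerBlDr addrC lerD2l.
by apply: ler_sum_nneg_subset => // i; rewrite inE => /andP[].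
Qed.

Lemma ler_sum_ratio (A : {set I}) (r c : I -> R) (rho : R) :
  (forall i, 0 < c i) -> (forall i, i \in A -> rho <= r i / c i) ->
  rho * \sum_(i in A) c i <= \sum_(i in A) r i.
Proof.
move=> c0 Ar; rewrite mulr_sumr ler_sum // => i /Ar.
by rewrite ler_pdivlMr // mulrC.
Qed.

End SumBounds.

Section GreedyOrder.
Variables (R : realType) (I : finType) (c r : I -> R) (T0 : {set I}) (s : seq I).
Hypothesis order_s : valid_order r c T0 s.

Lemma valid_order_uniq : uniq s.
Proof. by rewrite (perm_uniq order_s.1) enum_uniq. Qed.

Lemma valid_order_mem i : (i \in s) = (i \in T0).
Proof. by rewrite (perm_mem order_s.1) mem_enum. Qed.

Lemma valid_order_sum : \sum_(i <- s) c i = \sum_(i in T0) c i.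
Proof. by rewrite (perm_big _ order_s.1) big_enum. Qed.

Lemma valid_order_ratio_le x0 j k : (j <= k < size s)%N ->
  r (nth x0 s k) / c (nth x0 s k) <= r (nth x0 s j) / c (nth x0 s j).
Proof.
move=> /andP[jk ks].
have ratio_trans : transitive (fun i j => r j / c j <= r i / c i).
  by move=> y x z /= yx zy; exact: le_trans zy yx.
apply: (sorted_leq_nth ratio_trans (fun x => lexx _) x0 order_s.2) => //.
by rewrite inE (leq_ltn_trans jk ks).
Qed.

Lemma prefix_costE k : prefix_cost c s k = \sum_(i in [pred x | x \in take k s]) c i.
Proof. by rewrite /prefix_cost big_uniq ?take_uniq ?valid_order_uniq. Qed.

Lemma greedy_set_subset D : greedy_set c D T0 s \subset T0.
Proof.
rewrite /greedy_set; case: ifP => _; last exact: subxx.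
apply/fintype.subsetP => i.
by rewrite inE -valid_order_mem => /mem_take.
Qed.

Section Cut.
Variable D : R.
Hypothesis D_le_cost : D <= \sum_(i in T0) c i.
Let t := cut_index c D s.

Lemma cut_indexP :
  [/\ (t <= size s)%N, D <= prefix_cost c s t &
      forall k, (k < t)%N -> prefix_cost c s k < D].
Proof.
set P := fun k => D <= prefix_cost c s k.
have hasP : has P (iota 0 (size s).+1).
  apply/hasP; exists (size s); first by rewrite mem_iota add0n ltnS leqnn.
  by rewrite /P /prefix_cost take_size valid_order_sum.
have := hasP; rewrite has_find size_iota => t_lt.
split; first by rewrite /t /cut_index -ltnS.
  by have := nth_find 0 hasP; rewrite nth_iota.
move=> k kt; have := before_find 0 kt; rewrite nth_iota ?(ltn_trans kt) //.
by rewrite /P add0n ltNge => ->.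
Qed.

Lemma greedy_setE i : (i \in greedy_set c D T0 s) = (i \in take t s).
Proof. by rewrite /greedy_set D_le_cost inE. Qed.

Lemma greedy_set_cost : D <= \sum_(i in greedy_set c D T0 s) c i.
Proof.
have [_ D_le _] := cut_indexP.
by rewrite (eq_bigl _ _ greedy_setE) -prefix_costE.
Qed.

Lemma greedy_set_nth i : i \in greedy_set c D T0 s ->
  exists2 j, (j < t)%N & i = nth i s j.
Proof.
rewrite greedy_setE => it; have [t_size _ _] := cut_indexP.
have jt : (index i (take t s) < t)%N by rewrite -{2}(size_takel t_size) index_mem.
by exists (index i (take t s)); rewrite // -(nth_take _ jt) nth_index.
Qed.

(* Greedy is optimal for the ratio threshold: if some [H] of cost at least [D]
   has all ratios above [rho], an item of ratio at most [rho] comes after all of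
   [H], so the prefix before it would already cost [D]. *)
Lemma greedy_set_ratio_gt (H : {set I}) rho :
  (forall i, 0 < c i) -> H \subset T0 -> D <= \sum_(i in H) c i ->
  (forall i, i \in H -> rho < r i / c i) ->
  forall i, i \in greedy_set c D T0 s -> rho < r i / c i.
Proof.
move=> c0 /fintype.subsetP HT0 D_le_H H_ratio i /greedy_set_nth [j jt ->].
have [t_size _ prefix_lt] := cut_indexP.
have js : (j < size s)%N by exact: leq_trans jt t_size.
rewrite ltNge; apply/negP => ratio_j.
have H_prefix : {subset H <= [pred x | x \in take j s]}.
  move=> x xH; have xs : x \in s by rewrite valid_order_mem HT0.
  have [xj | jx] := ltnP (index x s) j.
    by rewrite inE -(nth_index x xs) -(nth_take _ xj) mem_nth // size_takel // ltnW.
  have := @valid_order_ratio_le x j (index x s).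
  rewrite jx index_mem xs nth_index // (set_nth_default i x js) => /(_ isT) x_le.
  by have := lt_le_trans (H_ratio x xH) (le_trans x_le ratio_j); rewrite ltxx.
have := prefix_lt _ jt; rewrite prefix_costE ltNge => /negP; apply.
apply: (le_trans D_le_H); apply: ler_sum_nneg_subset => // x; exact: ltW.
Qed.

End Cut.

Lemma greedy_slope_gt D (a : R) : 0 <= a -> a < greedy_slope r c D T0 s ->
  D <= \sum_(i in T0) c i /\
  forall i, i \in greedy_set c D T0 s -> a < r i / c i.
Proof.
move=> a0; rewrite /greedy_slope; case: ifP => D_le; last by rewrite ltNge a0.
have [t_size _ _] := cut_indexP D_le.
have size_t := size_takel t_size.
case takeE: (take _ s) / lastP size_t => [|p x]; first by rewrite ltNge a0.
rewrite rev_rcons size_rcons => size_p a_lt; split => // i /(greedy_set_nth D_le) [j jt ->].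
have pt : (size p < cut_index c D s)%N by rewrite -size_p.
have xE : x = nth x s (size p) by rewrite -(nth_take _ pt) takeE nth_rcons ltnn eqxx.
apply: (lt_le_trans a_lt); rewrite xE (set_nth_default x i (leq_trans jt t_size)).
by apply: valid_order_ratio_le; rewrite -ltnS size_p jt.
Qed.

End GreedyOrder.

Section Truncation.
Local Open Scope ereal_scope.
Local Open Scope ring_scope.
Context (d : measure_display) (T : measurableType d) (R : realType)
    (P : probability T R) (I : finType) (X : I -> {RV P >-> R}).
Hypothesis X_ge0 : forall i w, 0 <= X i w.

Let trunc (tau : R) i := fun w => Num.min (X i w / tau) 1.

Lemma minr1_le_double (y : R) : 0 <= y -> Num.min y 1 <= Num.min (y / 2) 1 * 2.
Proof. by move=> y0; rewrite /Num.min /Order.min; case: ifP; case: ifP; lra. Qed.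

Let trunc_measurable (tau : R) i : measurable_fun setT (trunc tau i).
Proof.
apply: measurable_realfun.measurable_minr; last exact: measurable_cst.
exact: measurable_realfun.measurable_funM.
Qed.

Let trunc_ge0 (tau : R) i w : 0 < tau -> 0 <= trunc tau i w.
Proof. by move=> tau0; rewrite le_min ler01 andbT divr_ge0 // ltW. Qed.

Lemma rtruncE (tau : R) i : 0 < tau -> 'E_P[trunc tau i] = (rtrunc X tau i)%:E.
Proof.
move=> tau0; have E_ge0 : (0 <= 'E_P[trunc tau i])%E.
  by apply: expectation_ge0 => w; exact: trunc_ge0.
have E_le1 : ('E_P[trunc tau i] <= 1)%E.
  rewrite -(expectation_cst P 1); apply: expectation_le.
  - exact: trunc_measurable.
  - exact: measurable_cst.
  - by move=> w; exact: trunc_ge0.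
  - by move=> w; rewrite /= ler01.
  - by apply: aeW => w; rewrite /trunc ge_min lexx orbT.
by rewrite /rtrunc fineK // ge0_fin_numE // (le_lt_trans E_le1) // ltry.
Qed.

Lemma rtrunc_le_double (tau : R) i : 0 < tau -> rtrunc X tau i <= 2 * rtrunc X (2 * tau) i.
Proof.
move=> tau0; have tau20 : 0 < 2 * tau by rewrite mulr_gt0.
rewrite -lee_fin EFinM -rtruncE // -rtruncE //.
have -> : (2%:E * 'E_P[trunc (2 * tau) i] = 'E_P[(2 : R) \o* trunc (2 * tau) i])%E.
  rewrite !unlock -ge0_integralZl_EFin //.
  - by apply: eq_integral => w _ /=; rewrite EFinM muleC.
  - by move=> w _; rewrite lee_fin trunc_ge0.
  - by apply/measurable_realfun.measurable_EFinP; exact: trunc_measurable.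
apply: expectation_le.
- exact: trunc_measurable.
- exact: measurable_realfun.measurable_funM (trunc_measurable _ _) (measurable_cst _).
- by move=> w; exact: trunc_ge0.
- by move=> w; rewrite /= mulr_ge0 // trunc_ge0.
- apply: aeW => w; rewrite /trunc /= invfM mulrA mulrAC.
  by apply: minr1_le_double; rewrite divr_ge0 // ltW.
Qed.

Lemma rtrunc_ratio_double (tau a ci : R) i : 0 < tau -> 0 < ci ->
  a < rtrunc X tau i / ci -> a / 2 < rtrunc X (2 * tau) i / ci.
Proof.
move=> tau0 ci0; have : rtrunc X tau i / ci <= 2 * rtrunc X (2 * tau) i / ci.
  by rewrite ler_wpM2r ?rtrunc_le_double // invr_ge0 ltW.
rewrite -mulrA; lra.
Qed.

End Truncation.

Theorem mainTheorem9 (d : measure_display) (T : measurableType d) (R : realType)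
    (P : probability T R) (I : finType) (c : I -> R) (X : I -> {RV P >-> R})
    (W : nat) (B eps C : R) (ord : nat -> seq I) (l0 : nat) :
  (forall i, 0 < c i) ->
  (forall i w, 0 <= X i w) ->
  mutually_independent X ->
  (1 <= W)%N ->
  (\sum_(i : I) 'E_P[X i] <= (W%:R)%:E)%E ->
  0 < B -> 0 < eps -> eps < 1 -> 1 < C ->
  (forall l, (l <= up_log 2 W)%N ->
     valid_order (rtrunc X (2 ^+ l)) c (eligible c B) (ord l)) ->
  let slope l := greedy_slope (rtrunc X (2 ^+ l)) c (C * B) (eligible c B) (ord l) in
  (l0 <= up_log 2 W)%N ->
  slope l0 <= eps / B ->
  (forall l, (l < l0)%N -> eps / B < slope l) ->
  (0 < l0)%N ->
  forall O : {set I}, \sum_(i in O) c i <= B ->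
    eps * (C - 1) / 2 <=
    \sum_(i in greedy_set c (C * B) (eligible c B) (ord l0) :\: O)
        rtrunc X (2 ^+ l0) i.
Proof.
move=> c0 X0 _ _ _ B0 eps0 _ C1 ord_valid slope l0W _ rich l0_gt0 O cost_O.
set l := l0.-1; have l0E : l0 = l.+1 by rewrite prednK.
have order_l : valid_order (rtrunc X (2 ^+ l)) c (eligible c B) (ord l).
  by apply: ord_valid; rewrite (leq_trans _ l0W) // l0E.
have l_lt : (l < l0)%N by rewrite ltn_predL.
have eB_ge0 : 0 <= eps / B by rewrite divr_ge0 // ltW.
have [cost_T ratio_l] := greedy_slope_gt order_l eB_ge0 (rich l l_lt).
set rho := eps / B / 2.
set S' := greedy_set c (C * B) (eligible c B) (ord l).
set S := greedy_set c (C * B) (eligible c B) (ord l0).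
have ratio_S' : forall i, i \in S' -> rho < rtrunc X (2 ^+ l0) i / c i.
  move=> i /ratio_l; rewrite l0E exprS.
  by apply: rtrunc_ratio_double; rewrite ?exprn_gt0.
have ratio_S := greedy_set_ratio_gt (ord_valid l0 l0W) cost_T c0
  (greedy_set_subset order_l _) (greedy_set_cost order_l cost_T) ratio_S'.
have cost_SO : C * B - B <= \sum_(i in S :\: O) c i.
  apply: le_trans (ler_sum_setD _ _ (fun i => ltW (c0 i))).
  exact: lerB (greedy_set_cost (ord_valid l0 l0W) cost_T) cost_O.
have ratio_SO : forall i, i \in S :\: O -> rho <= rtrunc X (2 ^+ l0) i / c i.
  by move=> i; rewrite inE => /andP[_ /ratio_S /ltW].
have -> : eps * (C - 1) / 2 = rho * (C * B - B) by rewrite /rho; field; rewrite lt0r_neq0.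
apply: le_trans (ler_sum_ratio c0 ratio_SO).
by rewrite ler_wpM2l // /rho divr_ge0.
Qed.
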